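(* Let $A\in\mathbb{C}^{n\times n}_r$ be represented by its Hartwig-Spindelb\''{o}ck decomposition $A=U\left(\begin{array}{cc}\Sigma K & \Sigma L\\ 0 & 0\end{array}\right)U^*$ (with $U$ unitary, $\Sigma={\rm diag}(\sigma_1,\dots,\sigma_r)$ the positive singular values, $KK^*+LL^*=I_r$), and assume ${\rm rank}(A^{\sim}AA^{\sim})={\rm rank}(A)$. Write $\left(\begin{array}{cc}G_1 & G_2\\ G_3 & G_4\end{array}\right)=U^*GU$ with $G_1\in\mathbb{C}^{r\times r}$, and $\Delta=\left(\begin{array}{cc}K & L\end{array}\right)U^*GU\left(\begin{array}{c}K^*\\ L^*\end{array}\right)$. Let $B,C,X\in\mathbb{C}^{n\times n}$. Then $X=A^{\mathfrak{m}}$ is the unique solution of the rank equation ${\rm rank}\left(\begin{array}{cc}A & B\\ C & X\end{array}\right)={\rm rank}(A)$ if and only if \[ B=U\left(\begin{array}{cc}B_1 & B_2\\ 0 & 0\end{array}\right)U^*G \quad\text{and}\quad C=GUTU^*, \] where \begin{align*} T&=\left(\begin{array}{cc}J_1\Sigma K & J_1\Sigma L\\ J_3\Sigma K & J_3\Sigma L\end{array}\right),\\ B_1&=\left(\begin{array}{cc}\Sigma K & \Sigma L\end{array}\right)\left[T^{(1)}\left(\begin{array}{c}K^*(G_1\Sigma\Delta)^{-1}\\ L^*(G_1\Sigma\Delta)^{-1}\end{array}\right)+(I_n-T^{(1)}T)Y_1\right],\\ B_2&=\left(\begin{array}{cc}\Sigma K & \Sigma L\end{array}\right)(I_n-T^{(1)}T)Y_2,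 \end{align*} with $J_1\in\mathbb{C}^{r\times r}$ and $J_3\in\mathbb{C}^{(n-r)\times r}$ satisfying $\mathcal{N}(T^* )\subseteq\mathcal{N}\left(\left(\begin{array}{cc}K & L\end{array}\right)\right)$, $Y_1\in\mathbb{C}^{n\times r}$ and $Y_2\in\mathbb{C}^{n\times(n-r)}$ arbitrary, and $T^{(1)}$ any matrix with $TT^{(1)}T=T$.
   Context: $G=\left(\begin{array}{cc}1&0\\0&-I_{n-1}\end{array}\right)$ is the Minkowski metric matrix; the Minkowski adjoint is $A^{\sim}=GA^*G$ for square $A$ (in general $A^{\sim}=GA^*F$). The Minkowski inverse $A^{\mathfrak{m}}$ is the unique $X$ with $AXA=A$, $XAX=X$, $(AX)^{\sim}=AX$, $(XA)^{\sim}=XA$; under the rank hypothesis it exists, and $G_1$ and $\Delta$ are nonsingular. *)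

From HB Require Import structures.
From mathcomp Require Import all_boot all_order all_algebra all_field.
Set Implicit Arguments. Unset Strict Implicit. Unset Printing Implicit Defensive.
Import Order.TTheory GRing.Theory Num.Theory.
Local Open Scope ring_scope.

Definition cadj (m n : nat) (A : 'M[algC]_(m, n)) : 'M[algC]_(n, m) :=
  (map_mx (fun z : algC => z^*) A)^T.

Definition mink_G (n : nat) : 'M[algC]_n :=
  \matrix_(i, j) (if i == j then (if val i == 0%N then 1 else -1) else 0).

Definition mink_adj (n : nat) (A : 'M[algC]_n) : 'M[algC]_n :=
  mink_G n *m cadj A *m mink_G n.

Definition is_minkowski_inverse (n : nat) (A X : 'M[algC]_n) : Prop :=
  [/\ A *m X *m A = A, X *m A *m X = X,
      mink_adj (A *m X) = A *m X & mink_adj (X *m A) = X *m A].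

(* Write A = F R with F = U [I; 0] Sigma and R = [K L] U^*.  For any such
   factorization with N = (F^* G F) (R G R^* ) invertible, the Minkowski
   inverse of A is G R^* N^-1 F^* G, and rank (A~ A A~) = r forces exactly
   this invertibility; in the coordinates of U the formula reads
   A^m = G U [K L]^* W [I 0] U^* G with W = (G1 Sigma Delta)^-1.
   The rank equation rank [A B; C X] = rank A has A^m as its only solution
   iff B = A Y, C = Z A and Z A Y = A^m.  Conjugating by G U turns (Z, Y)
   into (J, P) with C = G U T U^* for T = J Sigma [K L] and
   T P = M := [K L]^* W [I 0].  As W [I 0] has a right inverse, this system
   is solvable iff N(T^* ) is contained in N([K L]), and then Penrose's
   T1 M + (I - T1 T) Y describes all of its solutions. *)

From HB Require Import structures.
From mathcomp Require Import all_boot all_order all_algebra all_field.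

Set Implicit Arguments.
Unset Strict Implicit.
Unset Printing Implicit Defensive.

Import Order.TTheory GRing.Theory Num.Theory.
Local Open Scope ring_scope.

Section RingMatrix.
Variable R : pzRingType.

Lemma mulmx_rcancel m n p (P : 'M[R]_(n, p)) (Q : 'M[R]_(p, n)) :
  P *m Q = 1%:M -> forall X : 'M[R]_(m, n), X *m P *m Q = X.
Proof. by move=> PQ X; rewrite -mulmxA PQ mulmx1. Qed.

Lemma penrose_solution_eq m n p (T : 'M[R]_(m, n)) (T1 : 'M[R]_(n, m))
    (M : 'M[R]_(m, p)) P :
  T *m P = M -> P = T1 *m M + (1%:M - T1 *m T) *m P.
Proof. by move=> <-; rewrite mulmxBl mul1mx mulmxA addrC subrK. Qed.

Lemma penrose_solution m n p (T : 'M[R]_(m, n)) (T1 : 'M[R]_(n, m))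
    (M : 'M[R]_(m, p)) Y :
  T *m T1 *m T = T -> T *m T1 *m M = M ->
  T *m (T1 *m M + (1%:M - T1 *m T) *m Y) = M.
Proof.
by move=> gT TM; rewrite mulmxDr !mulmxA TM mulmxBr mulmx1 mulmxA gT subrr mul0mx addr0.
Qed.

Lemma ulsubmx_mulmx m n (X : 'M[R]_(m + n)) :
  row_mx 1%:M 0 *m X *m col_mx 1%:M 0 = ulsubmx X.
Proof.
rewrite -{1}[X]submxK mul_row_block !mul1mx !mul0mx !addr0.
by rewrite mul_row_col mulmx1 mulmx0 addr0.
Qed.

End RingMatrix.

Lemma invmxM (R : comUnitRingType) n (P Q : 'M[R]_n) :
  P \in unitmx -> Q \in unitmx -> invmx (P *m Q) = invmx Q *m invmx P.
Proof.
move=> uP uQ; have uPQ : P *m Q \in unitmx by rewrite unitmx_mul uP.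
have e : P *m Q *m (invmx Q *m invmx P) = 1%:M by rewrite mulmxA mulmxK ?mulmxV.
by rewrite -[LHS]mulmx1 -e mulmxA mulVmx ?mul1mx.
Qed.

Section FieldMatrix.
Variable F : fieldType.

Lemma unitmx_of_rank m p r (P : 'M[F]_(m, r)) (N : 'M[F]_r) (Q : 'M[F]_(r, p)) :
  \rank (P *m N *m Q) = r -> N \in unitmx.
Proof.
move=> rk; rewrite -row_full_unit /row_full eqn_leq rank_leq_row /= -{1}rk.
exact: leq_trans (mxrankM_maxl _ _) (mxrankM_maxr _ _).
Qed.

Lemma kernel_incl_factor m p n (P : 'M[F]_(m, n)) (Q : 'M[F]_(p, n)) :
  (forall x : 'cV[F]_n, P *m x = 0 -> Q *m x = 0) -> exists D, Q = D *m P.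
Proof.
move=> PQ; apply/submxP; rewrite submxE; apply/eqP/matrixP=> i j.
have := PQ (cokermx P *m delta_mx j 0).
rewrite [P *m _]mulmxA mulmx_coker mul0mx => /(_ erefl).
rewrite mulmxA -colE => /matrixP /(_ i 0).
by rewrite !mxE.
Qed.

Lemma rank_block_eq_dl m1 m2 n1 n2 (A : 'M[F]_(m1, n1)) (B : 'M[F]_(m1, n2)) C
    (X : 'M[F]_(m2, n2)) :
  \rank (block_mx A B C X) = \rank A -> exists Z, C = Z *m A.
Proof.
move=> rk; suff /submxP : (C <= A)%MS by case=> Z ->; exists Z.
have sAAC : (A <= col_mx A C)%MS by rewrite -addsmxE addsmxSl.
have rkAC : (\rank (col_mx A C) <= \rank A)%N.
  have <- : block_mx A B C X *m col_mx 1%:M 0 = col_mx A C.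
    by rewrite mul_block_col !mulmx1 !mulmx0 !addr0.
  by rewrite -rk mxrankM_maxl.
have : (col_mx A C <= A)%MS by rewrite -(geq_leqif (mxrank_leqif_sup sAAC)).
by rewrite col_mx_sub => /andP[].
Qed.

Lemma rank_block_eq_ur m1 m2 n1 n2 (A : 'M[F]_(m1, n1)) B (C : 'M[F]_(m2, n1))
    (X : 'M[F]_(m2, n2)) :
  \rank (block_mx A B C X) = \rank A -> exists Y, B = A *m Y.
Proof.
rewrite -mxrank_tr -(mxrank_tr A) tr_block_mx => /rank_block_eq_dl[Z trB].
by exists Z^T; rewrite -[B]trmxK trB trmx_mul trmxK.
Qed.

Lemma rank_block_factor_eq m1 m2 n1 n2 (A : 'M[F]_(m1, n1)) (Y : 'M[F]_(n1, n2))
    (Z : 'M[F]_(m2, m1)) X :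
  \rank (block_mx A (A *m Y) (Z *m A) X) = \rank A <-> X = Z *m A *m Y.
Proof.
have -> : block_mx A (A *m Y) (Z *m A) X =
    block_mx 1%:M 0 Z 1%:M *m block_mx A 0 0 (X - Z *m A *m Y)
      *m block_mx 1%:M Y 0 1%:M.
  by rewrite !mulmx_block !mulmx0 !mul0mx !mulmx1 !mul1mx !addr0 !add0r addrC subrK.
have uL : block_mx 1%:M 0 Z 1%:M \in unitmx.
  by rewrite unitmxE det_lblock !det1 mulr1 unitr1.
have uR : block_mx 1%:M Y 0 1%:M \in unitmx.
  by rewrite unitmxE det_ublock !det1 mulr1 unitr1.
rewrite mxrankMfree ?row_free_unit // eqmxMfull ?row_full_unit // rank_diag_block_mx.
rewrite -[X in _ = X <-> _]addn0; split=> [/addnI/eqP|->]; last by rewrite subrr mxrank0.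
by rewrite mxrank_eq0 subr_eq0 => /eqP.
Qed.

Lemma rank_block_eq_uniq_dr m1 m2 n1 n2 (A : 'M[F]_(m1, n1)) B C
    (X0 : 'M[F]_(m2, n2)) :
  (forall X, \rank (block_mx A B C X) = \rank A <-> X = X0) <->
  exists Y Z, [/\ B = A *m Y, C = Z *m A & X0 = Z *m A *m Y].
Proof.
split=> [uniqX | [Y [Z [-> -> ->]]] X]; last exact: rank_block_factor_eq.
have rk0 := (uniqX X0).2 erefl.
have [[Y BY] [Z CZ]] := (rank_block_eq_ur rk0, rank_block_eq_dl rk0).
by exists Y, Z; split=> //; apply/rank_block_factor_eq; rewrite -BY -CZ.
Qed.

End FieldMatrix.

Lemma cadjM m n p (P : 'M[algC]_(m, n)) (Q : 'M[algC]_(n, p)) :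
  cadj (P *m Q) = cadj Q *m cadj P.
Proof. by rewrite /cadj map_mxM trmx_mul. Qed.

Lemma cadjK m n (P : 'M[algC]_(m, n)) : cadj (cadj P) = P.
Proof. by apply/matrixP=> i j; rewrite /cadj !mxE conjCK. Qed.

Lemma cadj0 m n : cadj (0 : 'M[algC]_(m, n)) = 0.
Proof. by rewrite /cadj map_mx0 trmx0. Qed.

Lemma cadj1 n : cadj (1%:M : 'M[algC]_n) = 1%:M.
Proof. by rewrite /cadj map_mx1 trmx1. Qed.

Lemma cadj_row_mx m n1 n2 (P : 'M[algC]_(m, n1)) (Q : 'M[algC]_(m, n2)) :
  cadj (row_mx P Q) = col_mx (cadj P) (cadj Q).
Proof. by rewrite /cadj map_row_mx tr_row_mx. Qed.

Lemma cadj_col_mx m1 m2 n (P : 'M[algC]_(m1, n)) (Q : 'M[algC]_(m2, n)) :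
  cadj (col_mx P Q) = row_mx (cadj P) (cadj Q).
Proof. by rewrite /cadj map_col_mx tr_col_mx. Qed.

Lemma cadj_invmx n (P : 'M[algC]_n) : cadj (invmx P) = invmx (cadj P).
Proof. by rewrite /cadj (map_invmx Num.conj_op) trmx_inv. Qed.

Lemma unitmx_cadj n (P : 'M[algC]_n) : (cadj P \in unitmx) = (P \in unitmx).
Proof. by rewrite /cadj unitmx_tr map_unitmx. Qed.

Lemma ginv_range_cadj m n p (T : 'M[algC]_(m, n)) (T1 : 'M[algC]_(n, m))
    (Q : 'M[algC]_(p, m)) :
  T *m T1 *m T = T -> (forall x : 'cV[algC]_m, cadj T *m x = 0 -> Q *m x = 0) ->
  T *m T1 *m cadj Q = cadj Q.
Proof. by move=> gT /kernel_incl_factor[D ->]; rewrite cadjM cadjK mulmxA gT. Qed.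

Lemma kernel_incl_of_sol m n p q (T : 'M[algC]_(m, n)) (P : 'M[algC]_(n, p))
    (Q : 'M[algC]_(q, m)) (N : 'M[algC]_(q, p)) (N' : 'M[algC]_(p, q)) :
  T *m P = cadj Q *m N -> N *m N' = 1%:M ->
  forall x : 'cV[algC]_m, cadj T *m x = 0 -> Q *m x = 0.
Proof.
move=> TP NN' x Tx.
have NQ : cadj N *m Q = cadj P *m cadj T by rewrite -cadjM TP cadjM cadjK.
rewrite -[Q *m x]mul1mx -(@cadj1 q) -NN' cadjM -mulmxA (mulmxA (cadj N)) NQ.
by rewrite -mulmxA Tx !mulmx0.
Qed.

Lemma mink_G_sqr n : mink_G n *m mink_G n = 1%:M.
Proof.
apply/matrixP=> i j; rewrite !mxE (bigD1 i) //= big1 => [|k /negPf ki]; last first.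
  by rewrite !mxE eq_sym ki mul0r.
rewrite !mxE eqxx addr0; case: (eqVneq i j) => _; last by rewrite mulr0.
by case: ifP; rewrite ?mulr1 ?mulrNN ?mulr1.
Qed.

Lemma cadj_mink_G n : cadj (mink_G n) = mink_G n.
Proof.
apply/matrixP=> i j; rewrite /cadj !mxE eq_sym.
by case: eqP => [->|_]; [case: ifP; rewrite ?conjC1 ?rmorphN1 | rewrite conjC0].
Qed.

Lemma mink_adjM n (P Q : 'M[algC]_n) : mink_adj (P *m Q) = mink_adj Q *m mink_adj P.
Proof. by rewrite /mink_adj cadjM !mulmxA (mulmx_rcancel (mink_G_sqr n)). Qed.

Lemma minkowski_inverse_uniq n (A X Y : 'M[algC]_n) :
  is_minkowski_inverse A X -> is_minkowski_inverse A Y -> X = Y.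
Proof.
case=> AXA XAX sAX sXA [AYA YAY sAY sYA].
have adjA_AY : mink_adj A = mink_adj A *m mink_adj (A *m Y).
  by rewrite -mink_adjM AYA.
have adjA_XA : mink_adj A = mink_adj (X *m A) *m mink_adj A.
  by rewrite -mink_adjM mulmxA AXA.
have X_XAY : X = X *m A *m Y.
  have AX_AY : A *m X = A *m X *m (A *m Y).
    by rewrite -{1}sAX mink_adjM {1}adjA_AY mulmxA -mink_adjM sAX sAY.
  by rewrite -{1}XAX -mulmxA AX_AY !mulmxA XAX.
have Y_XAY : Y = X *m A *m Y.
  have YA_XA : Y *m A = X *m A *m (Y *m A).
    by rewrite -{1}sYA mink_adjM {1}adjA_XA -mulmxA -mink_adjM sXA sYA.
  by rewrite -{1}YAY YA_XA -(mulmxA (X *m A)) YAY.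
by rewrite X_XAY -Y_XAY.
Qed.

Section MinkowskiInverseOfFactorization.
Variables (n r : nat) (F : 'M[algC]_(n, r)) (R : 'M[algC]_(r, n)).
Local Notation G := (mink_G n).
Local Notation N := (cadj F *m G *m F *m (R *m G *m cadj R)).

Lemma mink_adj_cube_factor :
  mink_adj (F *m R) *m (F *m R) *m mink_adj (F *m R)
  = G *m cadj R *m N *m (cadj F *m G).
Proof. by rewrite /mink_adj !cadjM !mulmxA. Qed.

Lemma minkowski_inverse_factor :
  N \in unitmx ->
  is_minkowski_inverse (F *m R) (G *m cadj R *m invmx N *m cadj F *m G).
Proof.
rewrite unitmx_mul => /andP[uP uQ].
set P := cadj F *m G *m F; set Q := R *m G *m cadj R.
have cP : cadj P = P by rewrite /P !cadjM cadjK cadj_mink_G mulmxA.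
have cQ : cadj Q = Q by rewrite /Q !cadjM cadjK cadj_mink_G mulmxA.
have AX : F *m R *m (G *m cadj R *m invmx (P *m Q) *m cadj F *m G) =
    F *m invmx P *m cadj F *m G.
  by rewrite invmxM // !mulmxA -(mulmxA F) -/Q -(mulmxA F) mulmxK.
have XA : G *m cadj R *m invmx (P *m Q) *m cadj F *m G *m (F *m R) =
    G *m cadj R *m invmx Q *m R.
  rewrite invmxM // !mulmxA -(mulmxA _ (cadj F)) -(mulmxA _ (cadj F *m G)) -/P.
  by rewrite mulmxKV.
split.
- by rewrite AX !mulmxA -(mulmxA _ (cadj F)) -(mulmxA _ (cadj F *m G)) -/P mulmxKV.
- by rewrite XA !mulmxA -(mulmxA _ R) -(mulmxA _ (R *m G)) -/Q mulmxKV.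
- rewrite AX /mink_adj !cadjM cadjK cadj_mink_G cadj_invmx cP !mulmxA.
  by rewrite mink_G_sqr mul1mx.
- rewrite XA /mink_adj !cadjM !cadjK cadj_mink_G cadj_invmx cQ !mulmxA.
  by rewrite mulmx_rcancel ?mink_G_sqr.
Qed.

End MinkowskiInverseOfFactorization.

Section HartwigSpindelbockForm.
Variables (r s : nat) (U : 'M[algC]_(r + s)) (Sg K : 'M[algC]_r) (L : 'M[algC]_(r, s)).
Hypothesis U_unitary : U *m cadj U = 1%:M.

Local Notation G := (mink_G (r + s)).
Local Notation E := (col_mx 1%:M 0 : 'M[algC]_(r + s, r)).
Local Notation R := (row_mx K L).
Local Notation H := (cadj U *m G *m U).
Local Notation G1 := (ulsubmx H).
Local Notation Delta := (R *m H *m col_mx (cadj K) (cadj L)).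
Local Notation W := (invmx (G1 *m Sg *m Delta)).
Local Notation M := (cadj R *m W *m cadj E).
Local Notation A := (U *m (E *m Sg *m R) *m cadj U).
Local Notation Am := (G *m U *m M *m cadj U *m G).

Lemma cadj_E : cadj E = row_mx 1%:M 0.
Proof. by rewrite cadj_col_mx cadj1 cadj0. Qed.

Lemma cadj_EE : cadj E *m E = 1%:M.
Proof. by rewrite cadj_E mul_row_col mul1mx mul0mx addr0. Qed.

Lemma hs_block_factor : block_mx (Sg *m K) (Sg *m L) 0 0 = E *m Sg *m R.
Proof. by rewrite block_mxEv row_mx0 !mul_col_mx !mul1mx !mul0mx mul_mx_row. Qed.

Lemma hs_gram :
  cadj (U *m E *m Sg) *m G *m (U *m E *m Sg)
    *m (R *m cadj U *m G *m cadj (R *m cadj U))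
  = cadj Sg *m (G1 *m Sg *m Delta).
Proof. by rewrite -ulsubmx_mulmx -cadj_E -cadj_row_mx !cadjM cadjK !mulmxA.
Qed.

Lemma hs_units_of_rank :
  \rank (mink_adj A *m A *m mink_adj A) = r ->
  Sg \in unitmx /\ G1 *m Sg *m Delta \in unitmx.
Proof.
have -> : A = U *m E *m Sg *m (R *m cadj U) by rewrite !mulmxA.
rewrite mink_adj_cube_factor => /unitmx_of_rank.
by rewrite hs_gram unitmx_mul unitmx_cadj => /andP.
Qed.

Hypotheses (Sg_unit : Sg \in unitmx) (G1SgDelta_unit : G1 *m Sg *m Delta \in unitmx).

Lemma hs_minkowski_inverse : is_minkowski_inverse A Am.
Proof.
have -> : A = U *m E *m Sg *m (R *m cadj U) by rewrite !mulmxA.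
have -> : Am = G *m cadj (R *m cadj U) *m invmx (cadj Sg *m (G1 *m Sg *m Delta))
                 *m cadj (U *m E *m Sg) *m G.
  by rewrite [in RHS]invmxM ?unitmx_cadj // !cadjM cadjK !mulmxA mulmxKV ?unitmx_cadj.
rewrite -hs_gram; apply: minkowski_inverse_factor.
by rewrite hs_gram unitmx_mul unitmx_cadj Sg_unit G1SgDelta_unit.
Qed.

Lemma hs_T_block (J1 : 'M[algC]_r) (J3 : 'M[algC]_(s, r)) :
  block_mx (J1 *m Sg *m K) (J1 *m Sg *m L) (J3 *m Sg *m K) (J3 *m Sg *m L)
  = col_mx J1 J3 *m Sg *m R.
Proof. by rewrite -[RHS]mulmxA mul_mx_row mul_col_row !mulmxA. Qed.

Lemma hs_B_block (T T1 : 'M[algC]_(r + s)) Y1 Y2 :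
  block_mx (row_mx (Sg *m K) (Sg *m L) *m
              (T1 *m col_mx (cadj K *m W) (cadj L *m W) + (1%:M - T1 *m T) *m Y1))
           (row_mx (Sg *m K) (Sg *m L) *m (1%:M - T1 *m T) *m Y2) 0 0
  = E *m Sg *m R *m (T1 *m M + (1%:M - T1 *m T) *m row_mx Y1 Y2).
Proof.
rewrite -mul_mx_row -mul_col_mx -cadj_row_mx cadj_E.
rewrite [_ *m row_mx 1%:M 0]mul_mx_row mulmx1 mulmx0 [T1 *m row_mx _ _]mul_mx_row.
rewrite [_ *m row_mx Y1 Y2]mul_mx_row add_row_mx mulmx0 add0r.
rewrite !mul_col_mx mul1mx !mul0mx [_ *m row_mx _ (_ *m Y2)]mul_mx_row.
by rewrite block_mxEv row_mx0 !mulmxA.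
Qed.

Lemma hs_rank_factor_params B C :
  (exists Y Z, [/\ B = A *m Y, C = Z *m A & Am = Z *m A *m Y]) <->
  exists J T1 P, let T := J *m Sg *m R in
    [/\ forall x : 'cV[algC]_(r + s), cadj T *m x = 0 -> R *m x = 0,
        T *m T1 *m T = T,
        B = U *m (E *m Sg *m R *m (T1 *m M + (1%:M - T1 *m T) *m P)) *m cadj U *m G
      & C = G *m U *m T *m cadj U].
Proof.
have GG := mulmx_rcancel (mink_G_sqr (r + s)).
have cadjU_unitary := mulmx1C U_unitary.
have UU := mulmx_rcancel U_unitary; have UU' := mulmx_rcancel cadjU_unitary.
split=> [[Y [Z [-> -> AmZ]]] | [J [T1 [P [kerT gT -> ->]]]]].
- pose J := cadj U *m G *m Z *m U *m E; pose P := cadj U *m Y *m G *m U.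
  have TP : J *m Sg *m R *m P = M.
    have := congr1 (fun X => cadj U *m G *m X *m G *m U) AmZ.
    rewrite /J /P /= !mulmxA => <-.
    by rewrite !GG cadjU_unitary mul1mx !UU'.
  exists J, (pinvmx (J *m Sg *m R)), P; split.
  + apply: (kernel_incl_of_sol (P := P) (N := W *m cadj E) (N' := E *m invmx W)).
      by rewrite TP -mulmxA.
    by rewrite mulmxA (mulmx_rcancel cadj_EE) mulmxV // unitmx_inv.
  + exact: mulmxKpV (submx_refl _).
  + by rewrite -(penrose_solution_eq _ TP) /P !mulmxA UU GG.
  + by rewrite /J !mulmxA UU mink_G_sqr mul1mx.
- have TP : J *m Sg *m R *m (T1 *m M + (1%:M - T1 *m (J *m Sg *m R)) *m P) = M.
    by apply: penrose_solution; rewrite // !mulmxA (ginv_range_cadj gT kerT).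
  set P' := _ + _ in TP *.
  exists (U *m P' *m cadj U *m G), (G *m U *m J *m cadj E *m cadj U).
  by split; last rewrite -TP; rewrite !mulmxA !UU' ?(mulmx_rcancel cadj_EE).
Qed.

End HartwigSpindelbockForm.

Theorem theorem7p3 (r s : nat)
  (A : 'M[algC]_(r + s)) (U : 'M[algC]_(r + s)) (sigma : 'rV[algC]_r)
  (K : 'M[algC]_r) (L : 'M[algC]_(r, s))
  (hrank : \rank A = r)
  (hU : U *m cadj U = 1%:M)
  (hsigma : forall i, 0 < sigma 0 i)
  (hKL : K *m cadj K + L *m cadj L = 1%:M)
  (hA : A = U *m block_mx (diag_mx sigma *m K) (diag_mx sigma *m L) 0 0 *m cadj U)
  (hrk : \rank (mink_adj A *m A *m mink_adj A) = \rank A)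
  (Am : 'M[algC]_(r + s)) (hAm : is_minkowski_inverse A Am)
  (B C : 'M[algC]_(r + s)) :
  let Sg := diag_mx sigma in
  let G := mink_G (r + s) in
  let G1 := ulsubmx (cadj U *m G *m U) in
  let Delta := row_mx K L *m (cadj U *m G *m U) *m col_mx (cadj K) (cadj L) in
  (forall X : 'M[algC]_(r + s), \rank (block_mx A B C X) = \rank A <-> X = Am)
  <->
  exists (J1 : 'M[algC]_r) (J3 : 'M[algC]_(s, r))
         (Y1 : 'M[algC]_(r + s, r)) (Y2 : 'M[algC]_(r + s, s))
         (T1 : 'M[algC]_(r + s)),
    let T := block_mx (J1 *m Sg *m K) (J1 *m Sg *m L)
                      (J3 *m Sg *m K) (J3 *m Sg *m L) in
    let W := invmx (G1 *m Sg *m Delta) in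
    let B1 := row_mx (Sg *m K) (Sg *m L) *m
                (T1 *m col_mx (cadj K *m W) (cadj L *m W)
                 + (1%:M - T1 *m T) *m Y1) in
    let B2 := row_mx (Sg *m K) (Sg *m L) *m (1%:M - T1 *m T) *m Y2 in
    [/\ forall x : 'cV[algC]_(r + s), cadj T *m x = 0 -> row_mx K L *m x = 0,
        T *m T1 *m T = T,
        B = U *m block_mx B1 B2 0 0 *m cadj U *m G
      & C = G *m U *m T *m cadj U].
Proof.
cbv zeta; rewrite hs_block_factor in hA; subst A.
rewrite hrank in hrk; have [Sg_unit G1SgDelta_unit] := hs_units_of_rank hrk.
have -> := minkowski_inverse_uniq hAm (hs_minkowski_inverse Sg_unit G1SgDelta_unit).
apply: (iff_trans (rank_block_eq_uniq_dr _ _ _ _)).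
apply: (iff_trans (hs_rank_factor_params hU G1SgDelta_unit _ _)); split.
- case=> J [T1 [P params]].
  exists (usubmx J), (dsubmx J), (lsubmx P), (rsubmx P), T1.
  by rewrite hs_T_block vsubmxK hs_B_block hsubmxK.
- case=> J1 [J3 [Y1 [Y2 [T1]]]]; rewrite hs_T_block hs_B_block => params.
  by exists (col_mx J1 J3), T1, (row_mx Y1 Y2).
Qed.
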